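(* Let $r>0$, $d>0$ with $d\sqrt{2}<r$, and let $X\subseteq\mathbb{R}^2$ be a bounded $r$-regular set whose boundary contains no point of $d\mathbb{Z}^2$. Let $Q$ be the $2d\times 2d$ square formed by a $2\times 2$ block of pixels of the lattice $d\mathbb{Z}^2$, all four of which are grey. Then $\partial X$ does not intersect all four edges (sides of length $2d$) of $Q$.
   Context: A closed set $X\subseteq\mathbb{R}^2$ is $r$-regular if for each $x\in\partial X$ there are two open balls of radius $r$, $B_r(x_b)\subseteq X$ and $B_r(x_w)\subseteq \mathbb{R}^2\setminus X$, with $\overline{B_r(x_b)}\cap\overline{B_r(x_w)}=\{x\}$. Pixels are the closed squares $[dk,d(k+1)]\times[dl,d(l+1)]$, $k,l\in\mathbb{Z}$. A pixel $P$ is black if $\mathrm{area}(X\cap P)=d^2$, white if $\mathrm{area}(X\cap P)=0$, and grey otherwise. *)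

From HB Require Import structures.
From mathcomp Require Import all_boot all_order all_algebra.
From mathcomp Require Import all_classical all_reals all_analysis.
Set Implicit Arguments. Unset Strict Implicit. Unset Printing Implicit Defensive.
Import Order.TTheory GRing.Theory Num.Theory.
Import numFieldNormedType.Exports.
Local Open Scope classical_set_scope.
Local Open Scope ring_scope.

Definition odisk {R : realType} (c : R * R) (r : R) : set (R * R) :=
  [set y | (y.1 - c.1) ^+ 2 + (y.2 - c.2) ^+ 2 < r ^+ 2].

Definition cdisk {R : realType} (c : R * R) (r : R) : set (R * R) :=
  [set y | (y.1 - c.1) ^+ 2 + (y.2 - c.2) ^+ 2 <= r ^+ 2].

(* Topological boundary in R^2 (product topology = Euclidean topology). *)
Definition bdry {R : realType} (X : set (R * R)) : set (R * R) :=
  closure X `\` interior X.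

Definition r_regular {R : realType} (r : R) (X : set (R * R)) : Prop :=
  closed X /\
  forall x, bdry X x ->
    exists xb xw : R * R,
      odisk xb r `<=` X /\ odisk xw r `<=` ~` X /\
      cdisk xb r `&` cdisk xw r = [set x].

Definition bounded2 {R : realType} (X : set (R * R)) : Prop :=
  exists M : R, forall x, X x -> `|x.1| <= M /\ `|x.2| <= M.

Definition pixel {R : realType} (d : R) (k l : int) : set (R * R) :=
  [set y | d * k%:~R <= y.1 <= d * (k + 1)%:~R /\
           d * l%:~R <= y.2 <= d * (l + 1)%:~R].

Definition area {R : realType} (A : set (R * R)) : \bar R :=
  ((@lebesgue_measure R) \x (@lebesgue_measure R))%E A.

Definition grey_pixel {R : realType} (X : set (R * R)) (d : R) (k l : int) : Prop :=
  (0 < area (X `&` pixel d k l))%E /\ (area (X `&` pixel d k l) < (d ^+ 2)%:E)%E.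

Definition hseg {R : realType} (y a b : R) : set (R * R) :=
  [set p | p.2 = y /\ a <= p.1 <= b].
Definition vseg {R : realType} (x a b : R) : set (R * R) :=
  [set p | p.1 = x /\ a <= p.2 <= b].

From HB Require Import structures.
From mathcomp Require Import all_boot all_order all_algebra.
From mathcomp Require Import all_classical all_reals all_analysis.
From mathcomp Require Import ring lra.
Import Order.TTheory GRing.Theory Num.Theory.
Import numFieldNormedType.Exports.
Local Open Scope classical_set_scope.
Local Open Scope ring_scope.

(* Every boundary point p of an r-regular set X is touched by an open r-disk
   inside X and by one outside X; their centres are z and its mirror image
   2p - z, at distance r from p.  A centre is at distance at least r from every
   boundary point, and an inner and an outer centre are at least 2r apart.  No
   centre lies in Q: a pixel has diameter d * sqrt 2 < r, so a disk centred in
   a pixel contains it and the pixel would be black or white.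
   Suppose the boundary meets all four edges of Q; as the corners are lattice
   points, it meets them at interior points.  For each of these four points
   take the centre on the side of Q.  Elementary estimates put the centre of the
   bottom point to the left or to the right of Q, and similarly for the other
   edges, and forbid two neighbouring centres to sit at their common corner.
   So the centres turn around Q in one sense, say bottom -> left -> top.  Then
   each of these centres is closer than 2r to the mirror image of the next one,
   so they have the same colour (inside/outside), and the bottom centre is
   closer than 2r to the mirror image of the top one, or the other way round.
   Since z and 2p - z always have opposite colours, this is impossible. *)

Section SquareGeometry.
Variable R : realFieldType.

Lemma coord_le_norm {r x y : R} :
  0 <= r -> x ^+ 2 + y ^+ 2 = r ^+ 2 -> - r <= x <= r.
Proof. by move=> r0 xy; apply/andP; split; nra. Qed.

Lemma sqr_lt_between {m M x K : R} :
  0 <= m -> 0 <= M -> - m <= x -> x <= M -> m ^+ 2 < K -> M ^+ 2 < K ->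
  x ^+ 2 < K.
Proof.
move=> m0 M0 xm xM mK MK; have [x0|x0] := lerP 0 x.
- have : x ^+ 2 <= M ^+ 2 by rewrite ler_sqr ?nnegrE.
  lra.
- have : x ^+ 2 <= m ^+ 2 by rewrite -sqrrN ler_sqr ?nnegrE //; lra.
  lra.
Qed.

Variables d r : R.

Lemma tangent_center_beside_square (a b c e x y : R) :
  0 < d -> 0 < a -> a < 2 * d -> 0 < b -> b < 2 * d ->
  0 < c -> c < 2 * d -> 0 < e -> e < 2 * d ->
  0 <= y -> (x - a) ^+ 2 + y ^+ 2 = r ^+ 2 ->
  r ^+ 2 <= x ^+ 2 + (y - c) ^+ 2 ->
  r ^+ 2 <= (x - 2 * d) ^+ 2 + (y - e) ^+ 2 ->
  r ^+ 2 <= (x - b) ^+ 2 + (y - 2 * d) ^+ 2 ->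
  ~ (0 <= x <= 2 * d /\ 0 <= y <= 2 * d) -> x < 0 \/ 2 * d < x.
Proof.
move=> d0 a0 a2 b0 b2 c0 c2 e0 e2 y0 onB farL farR farT offQ.
have [x0|x0] := ltP x 0; first by left.
have [x2|x2] := ltP (2 * d) x; first by right.
have y2 : 2 * d < y.
  by rewrite ltNge; apply/negP => y2; apply: offQ; rewrite x0 x2 y0 y2.
have lo : a <= 2 * x.
  have : c * (c - 2 * y) <= 0 by rewrite mulr_ge0_le0 //; lra.
  nra.
have hi : 2 * x <= 2 * d + a.
  have : 0 <= e * (2 * y - e) by apply: mulr_ge0 => //; lra.
  nra.
nra.
Qed.

Lemma corner_tangent_center_lt (a c x y : R) :
  0 < a -> 0 < c -> x < 0 -> 0 <= y ->
  (x - a) ^+ 2 + y ^+ 2 = r ^+ 2 -> r ^+ 2 <= x ^+ 2 + (y - c) ^+ 2 -> a < c.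
Proof.
move=> a0 c0 x0 y0 onB farL.
have ax_lt0 : a * x < 0 by rewrite pmulr_rlt0.
have cy_ge0 : 0 <= c * y by rewrite mulr_ge0 // ltW.
by rewrite ltNge; apply/negP => ca; nra.
Qed.

Lemma adjacent_tangent_centers_close (a c x1 y1 x2 y2 : R) :
  0 < r -> 2 * d ^+ 2 < r ^+ 2 -> 0 < a -> 0 < c -> c < 2 * d ->
  x1 < 0 -> 0 <= y1 -> 0 <= x2 -> 2 * d < y2 ->
  (x1 - a) ^+ 2 + y1 ^+ 2 = r ^+ 2 -> x2 ^+ 2 + (y2 - c) ^+ 2 = r ^+ 2 ->
  r ^+ 2 <= x1 ^+ 2 + (y1 - c) ^+ 2 ->
  (x1 + x2) ^+ 2 + (y1 + y2 - 2 * c) ^+ 2 < 4 * r ^+ 2.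
Proof.
move=> r0 dr a0 c0 c2 x1_lt0 y1_ge0 x2_ge0 y2_gt onB onL farL.
have y1_lt : 2 * y1 < c.
  have ax_lt0 : a * x1 < 0 by rewrite pmulr_rlt0.
  have : 0 < c * (c - 2 * y1) by nra.
  by rewrite pmulr_rgt0 // subr_gt0.
have /andP[x1_ge _] := coord_le_norm (ltW r0) onB.
have /andP[_ x2_le] := coord_le_norm (ltW r0) onL.
rewrite addrC in onL; have /andP[_ y2_le] := coord_le_norm (ltW r0) onL.
have hx : (x1 + x2) ^+ 2 < r ^+ 2 by nra.
have hy : (y1 + y2 - 2 * c) ^+ 2 < (2 * d) ^+ 2 + r ^+ 2 by nra.
nra.
Qed.

Lemma opposite_tangent_centers_close (a b x1 y1 x2 y2 : R) :
  0 < r -> 2 * d ^+ 2 < r ^+ 2 -> 0 < a -> a < 2 * d -> 0 < b -> b < 2 * d ->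
  x1 < 0 -> 0 <= y1 -> 2 * d < x2 -> y2 <= 2 * d ->
  (x1 - a) ^+ 2 + y1 ^+ 2 = r ^+ 2 -> (x2 - b) ^+ 2 + (y2 - 2 * d) ^+ 2 = r ^+ 2 ->
  (x1 + x2 - 2 * b) ^+ 2 + (y1 + y2 - 4 * d) ^+ 2 < 4 * r ^+ 2 \/
  (x1 + x2 - 2 * a) ^+ 2 + (y1 + y2) ^+ 2 < 4 * r ^+ 2.
Proof.
move=> r0 dr a0 a2 b0 b2 x1_lt0 y1_ge0 x2_gt y2_le onB onT.
have /andP[x1_ge _] := coord_le_norm (ltW r0) onB.
have /andP[_ x2_le] := coord_le_norm (ltW r0) onT.
rewrite addrC in onB onT.
have /andP[_ y1_le] := coord_le_norm (ltW r0) onB.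
have /andP[y2_ge _] := coord_le_norm (ltW r0) onT.
have [y_ge|y_lt] := lerP (2 * d) (y1 + y2); [left|right].
- have y_sqr : (2 * d - y2) ^+ 2 <= y1 ^+ 2 by rewrite ler_sqr ?nnegrE; lra.
  have x_ge : a - x1 <= x2 - b by rewrite -ler_sqr ?nnegrE; lra.
  have hx : (x1 + x2 - 2 * b) ^+ 2 < 2 * r ^+ 2.
    by apply: (sqr_lt_between (m := 2 * d) (M := r)); nra.
  have hy : (y1 + y2 - 4 * d) ^+ 2 < 2 * r ^+ 2.
    by apply: (sqr_lt_between (m := 2 * d) (M := r)); nra.
  lra.
- have y_sqr : y1 ^+ 2 <= (2 * d - y2) ^+ 2 by rewrite ler_sqr ?nnegrE; lra.
  have x_le : x2 - b <= a - x1 by rewrite -ler_sqr ?nnegrE; lra.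
  have hx : (x1 + x2 - 2 * a) ^+ 2 < 2 * r ^+ 2.
    by apply: (sqr_lt_between (m := r) (M := 2 * d)); nra.
  have hy : (y1 + y2) ^+ 2 < 2 * r ^+ 2.
    by apply: (sqr_lt_between (m := r) (M := 2 * d)); nra.
  lra.
Qed.

End SquareGeometry.

Definition sqdist {R : realFieldType} (p q : R * R) : R :=
  (p.1 - q.1) ^+ 2 + (p.2 - q.2) ^+ 2.

Lemma sqdistC {R : realFieldType} (p q : R * R) : sqdist p q = sqdist q p.
Proof. by rewrite /sqdist; ring. Qed.

Definition mirror {R : realFieldType} (p z : R * R) : R * R :=
  (2 * p.1 - z.1, 2 * p.2 - z.2).

Definition translate {R : realFieldType} (o z : R * R) : R * R :=
  (o.1 + z.1, o.2 + z.2).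

(* [inner] and [outer] stand for the centres of the open r-disks contained in
   X and in its complement, [bd] the boundary of X. *)
Definition regular_boundary {R : realFieldType} (r : R)
    (inner outer bd : set (R * R)) : Prop :=
  [/\ forall z q, inner z \/ outer z -> bd q -> r ^+ 2 <= sqdist q z,
      forall z w, inner z -> outer w -> 4 * r ^+ 2 <= sqdist z w &
      forall p, bd p ->
        exists2 z, sqdist p z = r ^+ 2 & inner z /\ outer (mirror p z)].

Lemma regular_boundary_translate {R : realFieldType} {r : R}
    {inner outer bd : set (R * R)} (o : R * R) :
  regular_boundary r inner outer bd ->
  regular_boundary r (inner \o translate o) (outer \o translate o)
    (bd \o translate o).
Proof.
have sqdist_translate z w : sqdist (translate o z) (translate o w) = sqdist z w.
  by rewrite /sqdist /=; ring.
have mirror_translate p z :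
    mirror (translate o p) (translate o z) = translate o (mirror p z).
  by rewrite /mirror /translate /=; congr pair; ring.
case=> far apart centers; split=> [z q zc bq | z w iz ow | p /centers [z pz zc]].
- by rewrite -sqdist_translate; apply: far.
- by rewrite -sqdist_translate; apply: apart.
- have translateK : translate o (z.1 - o.1, z.2 - o.2) = z.
    by case: z {pz zc} => z1 z2; rewrite /translate /=; congr pair; ring.
  exists (z.1 - o.1, z.2 - o.2); first by rewrite -sqdist_translate translateK.
  by rewrite /= -mirror_translate translateK.
Qed.

Section FourEdges.
Variables (R : realFieldType) (d r : R) (inner outer bd : set (R * R)).
Hypotheses (d_gt0 : 0 < d) (r_gt0 : 0 < r) (diag_lt : 2 * d ^+ 2 < r ^+ 2).
Hypothesis center_far :
  forall z q, inner z \/ outer z -> bd q -> r ^+ 2 <= sqdist q z.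
Hypothesis centers_apart :
  forall z w, inner z -> outer w -> 4 * r ^+ 2 <= sqdist z w.
Hypothesis boundary_centers :
  forall p, bd p -> exists2 z, sqdist p z = r ^+ 2 & inner z /\ outer (mirror p z).
Hypothesis center_off_square :
  forall z, inner z \/ outer z -> ~ (0 <= z.1 <= 2 * d /\ 0 <= z.2 <= 2 * d).

Definition opposite (z w : R * R) := (inner z /\ outer w) \/ (outer z /\ inner w).

Definition tangent_center (p z : R * R) :=
  sqdist p z = r ^+ 2 /\ opposite z (mirror p z).

Lemma inward_tangent_center {p : R * R} (al be : R) : bd p ->
  exists2 z, tangent_center p z & 0 <= al * (z.1 - p.1) + be * (z.2 - p.2).
Proof.
move=> /boundary_centers [z pz [iz om]].
have mirrorK : mirror p (mirror p z) = z.
  by case: z {pz iz om} => z1 z2; rewrite /mirror /=; congr pair; ring.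
have [side|side] := lerP 0 (al * (z.1 - p.1) + be * (z.2 - p.2)).
  by exists z => //; split => //; left.
exists (mirror p z); last by rewrite /=; lra.
split; last by rewrite mirrorK; right.
by rewrite -pz /sqdist /=; ring.
Qed.

Lemma tangent_center_far {p z q : R * R} :
  tangent_center p z -> bd q -> r ^+ 2 <= sqdist q z.
Proof. by move=> [_ [[iz _]|[oz _]]]; apply: center_far; [left|right]. Qed.

Lemma tangent_center_off_square {p z : R * R} :
  tangent_center p z -> ~ (0 <= z.1 <= 2 * d /\ 0 <= z.2 <= 2 * d).
Proof. by move=> [_ [[iz _]|[oz _]]]; apply: center_off_square; [left|right]. Qed.

Lemma opposite_chain {z1 w1 z2 w2 z3 w3 : R * R} :
  opposite z1 w1 -> opposite z2 w2 -> opposite z3 w3 ->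
  ~ opposite z1 w2 -> ~ opposite z2 w3 -> opposite z1 w3 /\ opposite w1 z3.
Proof. by rewrite /opposite; tauto. Qed.

Lemma close_not_opposite {z w : R * R} : sqdist z w < 4 * r ^+ 2 -> ~ opposite z w.
Proof.
move=> close [[iz ow]|[oz iw]].
- by have := centers_apart _ _ iz ow; rewrite leNgt close.
- by have := centers_apart _ _ iw oz; rewrite sqdistC leNgt close.
Qed.

(* The boundary points are (a, 0), (b, 2d), (0, c), (2d, e).  The lemmas of
   [SquareGeometry] are stated for the bottom edge and the lower left corner;
   they are applied in reflected or rotated coordinates for the other edges and
   corners.  As [lra] ignores section hypotheses, side conditions such as
   [0 < 2 * d - c] are first reduced to them and closed by [//]. *)
Section Configuration.
Variables (a b c e : R) (zB zT zL zR : R * R).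
Hypotheses (a_gt0 : 0 < a) (a_lt : a < 2 * d) (b_gt0 : 0 < b) (b_lt : b < 2 * d).
Hypotheses (c_gt0 : 0 < c) (c_lt : c < 2 * d) (e_gt0 : 0 < e) (e_lt : e < 2 * d).
Hypotheses (bdB : bd (a, 0)) (bdT : bd (b, 2 * d)).
Hypotheses (bdL : bd (0, c)) (bdR : bd (2 * d, e)).
Hypotheses (tB : tangent_center (a, 0) zB) (tT : tangent_center (b, 2 * d) zT).
Hypotheses (tL : tangent_center (0, c) zL) (tR : tangent_center (2 * d, e) zR).
Hypotheses (zB_in : 0 <= zB.2) (zT_in : zT.2 <= 2 * d).
Hypotheses (zL_in : 0 <= zL.1) (zR_in : zR.1 <= 2 * d).

Lemma bottom_center_beside : zB.1 < 0 \/ 2 * d < zB.1.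
Proof.
have [onB _] := tB; have offQ := tangent_center_off_square tB.
have := tangent_center_far tB bdL; have := tangent_center_far tB bdR.
have := tangent_center_far tB bdT; rewrite /sqdist /= in onB * => farT farR farL.
by apply: (@tangent_center_beside_square R d r a b c e zB.1 zB.2) => //; lra.
Qed.

Lemma top_center_beside : zT.1 < 0 \/ 2 * d < zT.1.
Proof.
have [onT _] := tT; have offQ := tangent_center_off_square tT.
have := tangent_center_far tT bdL; have := tangent_center_far tT bdR.
have := tangent_center_far tT bdB; rewrite /sqdist /= in onT * => farB farR farL.
apply: (@tangent_center_beside_square R d r b a (2 * d - c) (2 * d - e)
  zT.1 (2 * d - zT.2)); rewrite ?subr_gt0 ?gtrBl ?subr_ge0 //; lra.
Qed.

Lemma left_center_beside : zL.2 < 0 \/ 2 * d < zL.2.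
Proof.
have [onL _] := tL; have offQ := tangent_center_off_square tL.
have := tangent_center_far tL bdB; have := tangent_center_far tL bdT.
have := tangent_center_far tL bdR; rewrite /sqdist /= in onL * => farR farT farB.
by apply: (@tangent_center_beside_square R d r c e a b zL.2 zL.1) => //; lra.
Qed.

Lemma right_center_beside : zR.2 < 0 \/ 2 * d < zR.2.
Proof.
have [onR _] := tR; have offQ := tangent_center_off_square tR.
have := tangent_center_far tR bdB; have := tangent_center_far tR bdT.
have := tangent_center_far tR bdL; rewrite /sqdist /= in onR * => farL farT farB.
apply: (@tangent_center_beside_square R d r e c (2 * d - a) (2 * d - b)
  zR.2 (2 * d - zR.1)); rewrite ?subr_gt0 ?gtrBl ?subr_ge0 //; lra.
Qed.

Lemma left_center_above : zB.1 < 0 -> 2 * d < zL.2.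
Proof.
move=> zB_left; case: left_center_beside => // zL_below; exfalso.
have [onB _] := tB; have [onL _] := tL.
have := tangent_center_far tB bdL; have := tangent_center_far tL bdB.
rewrite /sqdist /= in onB onL * => farBL farLB.
have a_lt_c : a < c.
  by apply: (@corner_tangent_center_lt R r a c zB.1 zB.2) => //; lra.
have c_lt_a : c < a.
  by apply: (@corner_tangent_center_lt R r c a zL.2 zL.1) => //; lra.
lra.
Qed.

Lemma top_center_right : 2 * d < zL.2 -> 2 * d < zT.1.
Proof.
move=> zL_above; case: top_center_beside => // zT_left; exfalso.
have [onT _] := tT; have [onL _] := tL.
have := tangent_center_far tT bdL; have := tangent_center_far tL bdT.
rewrite /sqdist /= in onT onL * => farTL farLT.
have b_lt_dc : b < 2 * d - c.
  apply: (@corner_tangent_center_lt R r b (2 * d - c) zT.1 (2 * d - zT.2));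
    rewrite ?subr_gt0 ?subr_ge0 //; lra.
have dc_lt_b : 2 * d - c < b.
  apply: (@corner_tangent_center_lt R r (2 * d - c) b (2 * d - zL.2) zL.1);
    rewrite ?subr_gt0 ?subr_ge0 //; lra.
lra.
Qed.

Lemma right_center_above : 2 * d < zB.1 -> 2 * d < zR.2.
Proof.
move=> zB_right; case: right_center_beside => // zR_below; exfalso.
have [onB _] := tB; have [onR _] := tR.
have := tangent_center_far tB bdR; have := tangent_center_far tR bdB.
rewrite /sqdist /= in onB onR * => farRB farBR.
have da_lt_e : 2 * d - a < e.
  apply: (@corner_tangent_center_lt R r (2 * d - a) e (2 * d - zB.1) zB.2);
    rewrite ?subr_gt0 ?subr_ge0 //; lra.
have e_lt_da : e < 2 * d - a.
  apply: (@corner_tangent_center_lt R r e (2 * d - a) zR.2 (2 * d - zR.1));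
    rewrite ?subr_gt0 ?subr_ge0 //; lra.
lra.
Qed.

Lemma top_center_left : 2 * d < zR.2 -> zT.1 < 0.
Proof.
move=> zR_above; case: top_center_beside => // zT_right; exfalso.
have [onT _] := tT; have [onR _] := tR.
have := tangent_center_far tT bdR; have := tangent_center_far tR bdT.
rewrite /sqdist /= in onT onR * => farTR farRT.
have db_lt_de : 2 * d - b < 2 * d - e.
  apply: (@corner_tangent_center_lt R r (2 * d - b) (2 * d - e)
    (2 * d - zT.1) (2 * d - zT.2)); rewrite ?subr_gt0 ?subr_ge0 //; lra.
have de_lt_db : 2 * d - e < 2 * d - b.
  apply: (@corner_tangent_center_lt R r (2 * d - e) (2 * d - b)
    (2 * d - zR.2) (2 * d - zR.1)); rewrite ?subr_gt0 ?subr_ge0 //; lra.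
lra.
Qed.

Lemma bottom_left_absurd : zB.1 < 0 -> False.
Proof.
move=> zB_left; have zL_above := left_center_above zB_left.
have zT_right := top_center_right zL_above.
have [onB _] := tB; have [onL _] := tL; have [onT _] := tT.
have := tangent_center_far tB bdL; have := tangent_center_far tL bdT.
rewrite /sqdist /= in onB onL onT * => farTL farBL.
have close_BL : sqdist zB (mirror (0, c) zL) < 4 * r ^+ 2.
  suff : (zB.1 + zL.1) ^+ 2 + (zB.2 + zL.2 - 2 * c) ^+ 2 < 4 * r ^+ 2.
    by rewrite /sqdist /=; lra.
  by apply: (@adjacent_tangent_centers_close R d r a c) => //; lra.
have close_LT : sqdist zL (mirror (b, 2 * d) zT) < 4 * r ^+ 2.
  suff : (2 * d - zL.2 + (2 * d - zT.2)) ^+ 2 + (zL.1 + zT.1 - 2 * b) ^+ 2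
      < 4 * r ^+ 2 by rewrite /sqdist /=; lra.
  apply: (@adjacent_tangent_centers_close R d r (2 * d - c) b);
    rewrite ?subr_gt0 ?subr_ge0 //; lra.
have close_BT : sqdist zB (mirror (b, 2 * d) zT) < 4 * r ^+ 2 \/
                sqdist (mirror (a, 0) zB) zT < 4 * r ^+ 2.
  suff : (zB.1 + zT.1 - 2 * b) ^+ 2 + (zB.2 + zT.2 - 4 * d) ^+ 2 < 4 * r ^+ 2 \/
         (zB.1 + zT.1 - 2 * a) ^+ 2 + (zB.2 + zT.2) ^+ 2 < 4 * r ^+ 2.
    by rewrite /sqdist /=; case=> ?; [left|right]; lra.
  by apply: (@opposite_tangent_centers_close R d r a b) => //; lra.
have [] := opposite_chain tB.2 tL.2 tT.2 (close_not_opposite close_BL)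
  (close_not_opposite close_LT).
by case: close_BT => /close_not_opposite.
Qed.

Lemma bottom_right_absurd : 2 * d < zB.1 -> False.
Proof.
move=> zB_right; have zR_above := right_center_above zB_right.
have zT_left := top_center_left zR_above.
have [onB _] := tB; have [onR _] := tR; have [onT _] := tT.
have := tangent_center_far tB bdR; have := tangent_center_far tR bdT.
rewrite /sqdist /= in onB onR onT * => farTR farRB.
have close_BR : sqdist zB (mirror (2 * d, e) zR) < 4 * r ^+ 2.
  suff : (2 * d - zB.1 + (2 * d - zR.1)) ^+ 2 + (zB.2 + zR.2 - 2 * e) ^+ 2
      < 4 * r ^+ 2 by rewrite /sqdist /=; lra.
  apply: (@adjacent_tangent_centers_close R d r (2 * d - a) e);
    rewrite ?subr_gt0 ?subr_ge0 //; lra.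
have close_RT : sqdist zR (mirror (b, 2 * d) zT) < 4 * r ^+ 2.
  suff : (2 * d - zR.2 + (2 * d - zT.2)) ^+ 2 +
         (2 * d - zR.1 + (2 * d - zT.1) - 2 * (2 * d - b)) ^+ 2 < 4 * r ^+ 2.
    by rewrite /sqdist /=; lra.
  apply: (@adjacent_tangent_centers_close R d r (2 * d - e) (2 * d - b));
    rewrite ?subr_gt0 ?subr_ge0 ?gtrBl //; lra.
have close_BT : sqdist zB (mirror (b, 2 * d) zT) < 4 * r ^+ 2 \/
                sqdist (mirror (a, 0) zB) zT < 4 * r ^+ 2.
  suff : (2 * d - zB.1 + (2 * d - zT.1) - 2 * (2 * d - b)) ^+ 2 +
           (zB.2 + zT.2 - 4 * d) ^+ 2 < 4 * r ^+ 2 \/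
         (2 * d - zB.1 + (2 * d - zT.1) - 2 * (2 * d - a)) ^+ 2 +
           (zB.2 + zT.2) ^+ 2 < 4 * r ^+ 2.
    by rewrite /sqdist /=; case=> ?; [left|right]; lra.
  apply: (@opposite_tangent_centers_close R d r (2 * d - a) (2 * d - b));
    rewrite ?subr_gt0 ?gtrBl //; lra.
have [] := opposite_chain tB.2 tR.2 tT.2 (close_not_opposite close_BR)
  (close_not_opposite close_RT).
by case: close_BT => /close_not_opposite.
Qed.

Lemma inward_tangent_centers_absurd : False.
Proof.
case: bottom_center_beside; first exact: bottom_left_absurd.
exact: bottom_right_absurd.
Qed.

End Configuration.

Lemma four_edges_absurd (a b c e : R) :
  0 < a -> a < 2 * d -> 0 < b -> b < 2 * d ->
  0 < c -> c < 2 * d -> 0 < e -> e < 2 * d ->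
  bd (a, 0) -> bd (b, 2 * d) -> bd (0, c) -> bd (2 * d, e) -> False.
Proof.
move=> a_gt0 a_lt b_gt0 b_lt c_gt0 c_lt e_gt0 e_lt bdB bdT bdL bdR.
have [zB tB zB_in] := inward_tangent_center 0 1 bdB.
have [zT tT zT_in] := inward_tangent_center 0 (-1) bdT.
have [zL tL zL_in] := inward_tangent_center 1 0 bdL.
have [zR tR zR_in] := inward_tangent_center (-1) 0 bdR.
rewrite /= in zB_in zT_in zL_in zR_in.
by apply: (@inward_tangent_centers_absurd a b c e zB zT zL zR) => //; lra.
Qed.

End FourEdges.

Lemma sqr_lt_of_mul_sqrt2 {R : rcfType} {d r : R} :
  0 <= d -> d * Num.sqrt 2 < r -> 2 * d ^+ 2 < r ^+ 2.
Proof.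
move=> d0 dr; have dr0 : 0 <= d * Num.sqrt 2 by rewrite mulr_ge0 ?sqrtr_ge0.
have := ltr_pM dr0 dr0 dr dr.
by rewrite mulrACA -!expr2 sqr_sqrtr // mulrC.
Qed.

Section RegularSets.
Variable R : realType.
Implicit Types (X : set (R * R)) (r : R).

Lemma open_odisk (c : R * R) r : open (odisk c r).
Proof.
pose f (y : R * R) := (y.1 - c.1) ^+ 2 + (y.2 - c.2) ^+ 2.
have -> : odisk c r = f @^-1` [set t | t < r ^+ 2] by [].
apply: open_comp; last exact: open_lt.
move=> x _; rewrite /f.
apply: cvgD; rewrite expr2; apply: cvgM.
- by apply: cvgB; [exact: cvg_fst | exact: cvg_cst].
- by apply: cvgB; [exact: cvg_fst | exact: cvg_cst].
- by apply: cvgB; [exact: cvg_snd | exact: cvg_cst].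
- by apply: cvgB; [exact: cvg_snd | exact: cvg_cst].
Qed.

Lemma bdry_far_from_disk {X} {z : R * R} {r} {q : R * R} :
  odisk z r `<=` X \/ odisk z r `<=` ~` X -> bdry X q -> r ^+ 2 <= sqdist q z.
Proof.
move=> zX [clq nintq]; rewrite leNgt; apply/negP => qz.
have nbhs_q : nbhs q (odisk z r).
  by apply: open_nbhs_nbhs; split; [exact: open_odisk|].
case: zX => [zX|zXC]; first by apply: nintq; exact: filterS nbhs_q.
by have [y [Xy /zXC]] := clq _ nbhs_q.
Qed.

Lemma odisks_apart X z w r :
  odisk z r `<=` X -> odisk w r `<=` ~` X -> 4 * r ^+ 2 <= sqdist z w.
Proof.
move=> zX wX; rewrite leNgt; apply/negP => close.
pose m := ((z.1 + w.1) / 2, (z.2 + w.2) / 2).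
have sqdist_m c : c = z \/ c = w -> sqdist m c = sqdist z w / 4.
  by move=> [->|->]; rewrite /m /sqdist /=; field.
have /wX : odisk w r m by rewrite /odisk /= -/(sqdist m w) sqdist_m; [lra | right].
by apply; apply: zX; rewrite /odisk /= -/(sqdist m z) sqdist_m; [lra | left].
Qed.

Lemma r_regular_tangent_center X r p : r_regular r X -> bdry X p ->
  exists2 z, sqdist p z = r ^+ 2 &
    odisk z r `<=` X /\ odisk (mirror p z) r `<=` ~` X.
Proof.
move=> [_ /(_ p) tangent] bp; have [zb [zw [zbX [zwX touch]]]] := tangent bp.
have [pb pw] : (cdisk zb r `&` cdisk zw r) p by rewrite touch.
have on_b : sqdist p zb = r ^+ 2.
  by apply/eqP; rewrite eq_le pb (bdry_far_from_disk (or_introl zbX) bp).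
have on_w : sqdist p zw = r ^+ 2.
  by apply/eqP; rewrite eq_le pw (bdry_far_from_disk (or_intror zwX) bp).
pose m := ((zb.1 + zw.1) / 2, (zb.2 + zw.2) / 2).
have m_in c : c = zb \/ c = zw -> cdisk c r m.
  have : 0 <= sqdist p m by rewrite addr_ge0 ?sqr_ge0.
  by rewrite /cdisk /sqdist /= in on_b on_w * => ? [->|->]; lra.
have : [set p] m by rewrite -touch; split; apply: m_in; [left|right].
move=> /= mp; exists zb => //; split => //.
suff -> : mirror p zb = zw by [].
by rewrite -mp /mirror /m /=; case: (zb) (zw) => ? ? [? ?] /=; congr pair; field.
Qed.

Lemma r_regular_boundary X r : r_regular r X ->
  regular_boundary r (fun z => odisk z r `<=` X) (fun z => odisk z r `<=` ~` X)
    (bdry X).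
Proof.
move=> reg; split => [z q|z w|p]; first exact: bdry_far_from_disk.
  exact: odisks_apart.
exact: r_regular_tangent_center.
Qed.

End RegularSets.

Section Pixels.
Variable R : realType.
Implicit Types (X : set (R * R)) (d r : R) (i j : int).

Lemma pixelE d i j (z : R * R) : pixel d i j z <->
  d * i%:~R <= z.1 <= d * i%:~R + d /\ d * j%:~R <= z.2 <= d * j%:~R + d.
Proof. by rewrite /pixel /= !intrD !mulrDr !mulr1. Qed.

Lemma lebesgue_measure_itv_cc (x y : R) : x <= y ->
  (@lebesgue_measure R) `[x, y] = (y - x)%:E.
Proof.
move=> xy; rewrite lebesgue_measure_itv /= lte_fin.
have [xy'|yx] := ltP x y; first by rewrite EFinB.
have -> : y = x by apply/eqP; rewrite eq_le xy yx.
by rewrite subrr.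
Qed.

Lemma area_pixel d i j : 0 < d -> area (pixel d i j) = (d ^+ 2)%:E.
Proof.
move=> d0.
have -> : pixel d i j =
    `[d * i%:~R, d * (i + 1)%:~R] `*` `[d * j%:~R, d * (j + 1)%:~R].
  by apply/seteqP; split=> -[x y] /=; rewrite !in_itv.
have step (n : int) : d * n%:~R <= d * (n + 1)%:~R.
  by rewrite ler_pM2l // ler_int ler_wpDr.
rewrite /area product_measure1E //.
rewrite -[X in (X * _)%E]/((@lebesgue_measure R) _).
rewrite -[X in (_ * X)%E]/((@lebesgue_measure R) _).
rewrite !lebesgue_measure_itv_cc // -EFinM.
by congr (_%:E); rewrite !intrD; ring.
Qed.

Lemma pixel_sub_odisk {d r i j} {z : R * R} : 0 < d -> 2 * d ^+ 2 < r ^+ 2 ->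
  pixel d i j z -> pixel d i j `<=` odisk z r.
Proof.
move=> d0 dr /pixelE [/andP[z1 z2] /andP[z3 z4]].
move=> y /pixelE [/andP[y1 y2] /andP[y3 y4]].
have : (y.1 - z.1) ^+ 2 <= d ^+ 2 by nra.
have : (y.2 - z.2) ^+ 2 <= d ^+ 2 by nra.
rewrite /odisk /=; lra.
Qed.

Lemma grey_pixel_no_center {X d r i j} {z : R * R} : 0 < d -> 2 * d ^+ 2 < r ^+ 2 ->
  grey_pixel X d i j -> pixel d i j z ->
  ~ (odisk z r `<=` X \/ odisk z r `<=` ~` X).
Proof.
move=> d0 dr [grey_gt0 grey_lt] /(pixel_sub_odisk d0 dr) sub [zX|zXC].
- have full : X `&` pixel d i j = pixel d i j.
    by apply/seteqP; split=> y; [case | move=> py; split => //; apply/zX/sub].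
  by move: grey_lt; rewrite full area_pixel // ltxx.
- have empty : X `&` pixel d i j = set0.
    by apply/seteqP; split=> y // [Xy /sub /zXC].
  by move: grey_gt0; rewrite empty /area measure0 ltxx.
Qed.

Lemma grey_block_no_center X d r k l (z : R * R) : 0 < d -> 2 * d ^+ 2 < r ^+ 2 ->
  grey_pixel X d k l -> grey_pixel X d (k + 1) l ->
  grey_pixel X d k (l + 1) -> grey_pixel X d (k + 1) (l + 1) ->
  odisk z r `<=` X \/ odisk z r `<=` ~` X ->
  ~ (d * k%:~R <= z.1 <= d * k%:~R + 2 * d /\
     d * l%:~R <= z.2 <= d * l%:~R + 2 * d).
Proof.
move=> d0 dr g00 g10 g01 g11 center [/andP[x0 x2] /andP[y0 y2]].
have in_grey i j : grey_pixel X d i j -> pixel d i j z -> False.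
  by move=> g /(grey_pixel_no_center d0 dr g); apply.
have [x1|x1] := lerP z.1 (d * k%:~R + d); have [y1|y1] := lerP z.2 (d * l%:~R + d).
- by apply: (in_grey _ _ g00); apply/pixelE; lra.
- by apply: (in_grey _ _ g01); apply/pixelE; rewrite intrD mulrDr mulr1; lra.
- by apply: (in_grey _ _ g10); apply/pixelE; rewrite intrD mulrDr mulr1; lra.
- by apply: (in_grey _ _ g11); apply/pixelE; rewrite !intrD !mulrDr !mulr1; lra.
Qed.

End Pixels.

Section SquareEdges.
Variable R : realType.

Lemma hseg_interior {bd : set (R * R)} {y x0 x1 : R} :
  ~ bd (x0, y) -> ~ bd (x1, y) ->
  bd `&` hseg y x0 x1 !=set0 -> exists2 x, x0 < x < x1 & bd (x, y).
Proof.
move=> n0 n1 [[x y'] [bdx [/= ey /andP[x0x xx1]]]]; subst y'; exists x => //.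
rewrite !lt_neqAle x0x xx1 !andbT.
by apply/andP; split; apply/eqP => ex;
  [apply: n0; rewrite ex | apply: n1; rewrite -ex].
Qed.

Lemma vseg_interior {bd : set (R * R)} {x y0 y1 : R} :
  ~ bd (x, y0) -> ~ bd (x, y1) ->
  bd `&` vseg x y0 y1 !=set0 -> exists2 y, y0 < y < y1 & bd (x, y).
Proof.
move=> n0 n1 [[x' y] [bdy [/= ex /andP[y0y yy1]]]]; subst x'; exists y => //.
rewrite !lt_neqAle y0y yy1 !andbT.
by apply/andP; split; apply/eqP => ey;
  [apply: n0; rewrite ey | apply: n1; rewrite -ey].
Qed.

Lemma regular_boundary_square_edges (d r x0 y0 : R)
    (inner outer bd : set (R * R)) :
  0 < d -> 0 < r -> 2 * d ^+ 2 < r ^+ 2 -> regular_boundary r inner outer bd ->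
  (forall z, inner z \/ outer z ->
     ~ (x0 <= z.1 <= x0 + 2 * d /\ y0 <= z.2 <= y0 + 2 * d)) ->
  ~ bd (x0, y0) -> ~ bd (x0 + 2 * d, y0) ->
  ~ bd (x0, y0 + 2 * d) -> ~ bd (x0 + 2 * d, y0 + 2 * d) ->
  ~ [/\ bd `&` hseg y0 x0 (x0 + 2 * d) !=set0,
        bd `&` hseg (y0 + 2 * d) x0 (x0 + 2 * d) !=set0,
        bd `&` vseg x0 y0 (y0 + 2 * d) !=set0 &
        bd `&` vseg (x0 + 2 * d) y0 (y0 + 2 * d) !=set0].
Proof.
move=> d0 r0 dr /(regular_boundary_translate (x0, y0)) [far apart centers] off.
move=> n00 n20 n02 n22 [/(hseg_interior n00 n20) [a /andP[a0 a1] bdB]].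
move=> /(hseg_interior n02 n22) [b /andP[b0 b1] bdT].
move=> /(vseg_interior n00 n02) [c /andP[c0 c1] bdL].
move=> /(vseg_interior n20 n22) [e /andP[e0 e1] bdR].
apply: (@four_edges_absurd R d r _ _ _ d0 r0 dr far apart centers _
  (a - x0) (b - x0) (c - y0) (e - y0)).
- by move=> z /off; rewrite /translate /=; lra.
all: by rewrite /= /translate /= ?addr0 ?subrKC //; lra.
Qed.

End SquareEdges.

Theorem lemma3p14 (R : realType) (r d : R) (X : set (R * R)) (k l : int) :
  0 < r -> 0 < d -> d * Num.sqrt 2 < r ->
  bounded2 X -> r_regular r X ->
  (forall i j : int, ~ bdry X (d * i%:~R, d * j%:~R)) ->
  grey_pixel X d k l -> grey_pixel X d (k + 1) l ->
  grey_pixel X d k (l + 1) -> grey_pixel X d (k + 1) (l + 1) ->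
  ~ [/\ bdry X `&` hseg (d * l%:~R) (d * k%:~R) (d * (k + 2)%:~R) !=set0,
        bdry X `&` hseg (d * (l + 2)%:~R) (d * k%:~R) (d * (k + 2)%:~R) !=set0,
        bdry X `&` vseg (d * k%:~R) (d * l%:~R) (d * (l + 2)%:~R) !=set0 &
        bdry X `&` vseg (d * (k + 2)%:~R) (d * l%:~R) (d * (l + 2)%:~R) !=set0].
Proof.
move=> r_gt0 d_gt0 dsr _ /r_regular_boundary reg no_lattice g00 g10 g01 g11.
have diag := sqr_lt_of_mul_sqrt2 (ltW d_gt0) dsr.
have lattice_add2 (i : int) : d * (i + 2)%:~R = d * i%:~R + 2 * d.
  by rewrite intrD; ring.
rewrite !lattice_add2.
apply: (@regular_boundary_square_edges R d r _ _ _ _ _ d_gt0 r_gt0 diag reg).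
- by move=> z; apply: grey_block_no_center.
- exact: no_lattice.
- by have := no_lattice (k + 2) l; rewrite lattice_add2.
- by have := no_lattice k (l + 2); rewrite lattice_add2.
- by have := no_lattice (k + 2) (l + 2); rewrite !lattice_add2.
Qed.
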